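(* Let $v:\mathbb{C}\rightarrow\mathbb{R}$ be a solution of $v_{z\bar z}+\frac12\sinh(2v)=0$, and let $\phi_t:(\mathbb{C},e^{2v}|dz|^2)\rightarrow\mathbb{S}^3$, $t\in\mathbb{R}$, be a $1$-parameter family of isometric minimal immersions with Hopf differentials $\Theta_{\phi_t}=\frac{i}{2}e^{it}dz\otimes dz$. Then for each $t$ the map \[ \Phi_t(z)=\bigl(\nu^+_{\phi_t}(z),\,2\,\mathrm{Im}(ze^{it/2})\bigr) \] is an isometric minimal immersion $(\mathbb{C},4\cosh^2v\,|dz|^2)\rightarrow\mathbb{S}^2_+\times\mathbb{R}$ with Hopf differential $e^{it}dz\otimes dz$; i.e., $\{\Phi_t\}$ is the $1$-parameter family of isometric minimal immersions of $(\mathbb{C},4\cosh^2v|dz|^2)$ into $\mathbb{S}^2\times\mathbb{R}$ with Hopf differentials $e^{it}dz\otimes dz$.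
   Context: For a conformal minimal immersion $\phi:\Sigma\to\mathbb{S}^3\subset\mathbb{R}^4$ with conformal parameter $z=x+iy$, $N$ is the unit normal in $\mathbb{S}^3$ with $\{\phi_x,\phi_y,\phi,N\}$ positively oriented in $\mathbb{R}^4$; its Hopf differential is $\Theta_\phi=\langle\phi_z,N_z\rangle dz\otimes dz$ ($\langle\cdot,\cdot\rangle$ complex-bilinear, $\partial_z=\frac12(\partial_x-i\partial_y)$). $\Lambda^2\mathbb{R}^4$ has the inner product $\langle v\wedge w,v'\wedge w'\rangle=\langle v,v'\rangle\langle w,w'\rangle-\langle v,w'\rangle\langle w,v'\rangle$; $\Lambda^2_+\mathbb{R}^4$ is the $+1$ eigenspace of the Hodge star, $\mathbb{S}^2_+$ its unit sphere (an isometric copy of $\mathbb{S}^2$), and $\nu^+_\phi(p)=\frac1{\sqrt2}(e_1\wedge e_2+\phi(p)\wedge N_p)$ for an oriented orthonormal basis $\{e_1,e_2\}$ of $d\phi(T_p\Sigma)$. For a conformal immersion $\Phi=(\Phi_1,\Phi_2)$ into $\mathbb{S}^2\times\mathbb{R}$, its Hopf differential is $\langle(\Phi_1)_z,(\Phi_1)_z\rangle dz\otimes dz$. *)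

From Stdlib Require Import Reals.
From Coquelicot Require Import Coquelicot.
Open Scope R_scope.

(* Vectors of R^n are represented as functions nat -> R; only the
   components 0..n-1 are ever used (all operations take the dimension n). *)
Definition vec := nat -> R.

Fixpoint sumn (n : nat) (f : nat -> R) : R :=
  match n with O => 0 | S m => sumn m f + f m end.

Definition dot (n : nat) (a b : vec) : R := sumn n (fun i => a i * b i).
Definition vnorm (n : nat) (a : vec) : R := sqrt (dot n a a).
Definition scale (c : R) (a : vec) : vec := fun i => c * a i.
Definition vadd (a b : vec) : vec := fun i => a i + b i.

(* Surfaces parametrized by z = x + i y : maps R -> R -> R^n *)
Definition dxs (f : R -> R -> R) (x y : R) : R := Derive (fun s => f s y) x.
Definition dys (f : R -> R -> R) (x y : R) : R := Derive (fun s => f x s) y.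
Definition dx (f : R -> R -> vec) (x y : R) : vec := fun i => dxs (fun a b => f a b i) x y.
Definition dy (f : R -> R -> vec) (x y : R) : vec := fun i => dys (fun a b => f a b i) x y.
Definition lap (f : R -> R -> vec) (x y : R) : vec :=
  vadd (dx (dx f) x y) (dy (dy f) x y).
Definition laps (f : R -> R -> R) (x y : R) : R :=
  dxs (dxs f) x y + dys (dys f) x y.

(* C^infinity: f lies in a class of maps all of whose members are
   continuous with existing partial derivatives, and which is closed under
   taking partial derivatives (so all iterated partials exist and are continuous). *)
Definition smooth (n : nat) (f : R -> R -> vec) : Prop :=
  exists S : (R -> R -> vec) -> Prop, S f /\
    forall g, S g ->
      (forall i x y, (i < n)%nat ->
         continuous (fun p : R * R => g (fst p) (snd p) i) (x, y) /\
         ex_derive (fun s => g s y i) x /\ ex_derive (fun s => g x s i) y)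
      /\ S (dx g) /\ S (dy g).

Definition smooth_scalar (v : R -> R -> R) : Prop := smooth 1 (fun x y _ => v x y).

(* d/dz = (d/dx - i d/dy)/2 of a vector-valued map, as (real part, imaginary part) *)
Definition dz (f : R -> R -> vec) (x y : R) : vec * vec :=
  (scale (/ 2) (dx f x y), scale (- / 2) (dy f x y)).
(* complex-bilinear extension of the Euclidean inner product on R^n *)
Definition cdot (n : nat) (a b : vec * vec) : C :=
  (dot n (fst a) (fst b) - dot n (snd a) (snd b),
   dot n (fst a) (snd b) + dot n (snd a) (fst b)).

(* conformal (isometric) immersion with metric lam |dz|^2 *)
Definition isometric (n : nat) (f : R -> R -> vec) (lam : R -> R -> R) : Prop :=
  forall x y, dot n (dx f x y) (dx f x y) = lam x y /\
              dot n (dy f x y) (dy f x y) = lam x y /\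
              dot n (dx f x y) (dy f x y) = 0.

Definition det3 (a b c : vec) (p q r : nat) : R :=
  a p * (b q * c r - b r * c q) - a q * (b p * c r - b r * c p)
  + a r * (b p * c q - b q * c p).
(* cross4 a b c is the vector with dot 4 (cross4 a b c) d = det(a,b,c,d) *)
Definition cross4 (a b c : vec) : vec := fun i =>
  match i with
  | 0%nat => - det3 a b c 1 2 3
  | 1%nat => det3 a b c 0 2 3
  | 2%nat => - det3 a b c 0 1 3
  | 3%nat => det3 a b c 0 1 2
  | _ => 0
  end.
Definition det4 (a b c d : vec) : R := dot 4 (cross4 a b c) d.

(* unit normal N of phi in S^3 with {phi_x, phi_y, phi, N} positively oriented:
   the normalized generalized cross product of phi_x, phi_y, phi *)
Definition normalS3 (phi : R -> R -> vec) (x y : R) : vec :=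
  let w := cross4 (dx phi x y) (dy phi x y) (phi x y) in scale (/ vnorm 4 w) w.

(* minimal immersion into a submanifold M of Euclidean space, for a conformal
   parametrization: the Laplacian (= 2 lam * mean curvature vector in R^n) is
   orthogonal to T M.  For M = S^3: T_p S^3 = p^perp. *)
Definition minimal_S3 (phi : R -> R -> vec) : Prop :=
  forall x y (w : vec), dot 4 w (phi x y) = 0 -> dot 4 (lap phi x y) w = 0.

Definition isometric_minimal_S3 (phi : R -> R -> vec) (lam : R -> R -> R) : Prop :=
  smooth 4 phi /\ (forall x y, dot 4 (phi x y) (phi x y) = 1) /\
  isometric 4 phi lam /\ minimal_S3 phi.

Definition hopfS3 (phi : R -> R -> vec) (x y : R) : C :=
  cdot 4 (dz phi x y) (dz (normalS3 phi) x y).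

(* ---- Lambda^2 R^4 = R^6, basis e_i^e_j (i<j) in the order
   01, 02, 03, 12, 13, 23.  In these coordinates the inner product
   <v^w,v'^w'> = <v,v'><w,w'> - <v,w'><w,v'> is the standard dot on R^6. *)
Definition wedge (a b : vec) : vec := fun k =>
  match k with
  | 0%nat => a 0%nat * b 1%nat - a 1%nat * b 0%nat
  | 1%nat => a 0%nat * b 2%nat - a 2%nat * b 0%nat
  | 2%nat => a 0%nat * b 3%nat - a 3%nat * b 0%nat
  | 3%nat => a 1%nat * b 2%nat - a 2%nat * b 1%nat
  | 4%nat => a 1%nat * b 3%nat - a 3%nat * b 1%nat
  | 5%nat => a 2%nat * b 3%nat - a 3%nat * b 2%nat
  | _ => 0
  end.

Definition hodge (w : vec) : vec := fun k =>
  match k with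
  | 0%nat => w 5%nat
  | 1%nat => - w 4%nat
  | 2%nat => w 3%nat
  | 3%nat => w 2%nat
  | 4%nat => - w 1%nat
  | 5%nat => w 0%nat
  | _ => 0
  end.
Definition self_dual (w : vec) : Prop := forall k, (k < 6)%nat -> hodge w k = w k.

Definition nu_plus (phi : R -> R -> vec) (x y : R) : vec :=
  let e1 := scale (/ vnorm 4 (dx phi x y)) (dx phi x y) in
  let e2 := scale (/ vnorm 4 (dy phi x y)) (dy phi x y) in
  scale (/ sqrt 2) (vadd (wedge e1 e2) (wedge (phi x y) (normalS3 phi x y))).

(* Phi_t(z) = (nu^+_{phi_t}(z), 2 Im(z e^{it/2})) in Lambda^2 R^4 x R = R^7
   (coordinates 0..5: bivector, coordinate 6: the R factor) *)
Definition PhiMap (t : R) (phi : R -> R -> vec) (x y : R) : vec := fun k =>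
  if (k <? 6)%nat then nu_plus phi x y k
  else if (k =? 6)%nat then 2 * (x * sin (t / 2) + y * cos (t / 2))
  else 0.

(* minimal immersion into S^2_+ x R (subset of Lambda^2 x R = R^7 with the
   product metric): Laplacian orthogonal to T(S^2_+ x R) at Phi(p), which is
   {(w, s) : w in Lambda^2_+, w perp Phi_1(p), s in R}. *)
Definition minimal_S2R (Phi : R -> R -> vec) : Prop :=
  forall x y (w : vec), self_dual w -> dot 6 w (Phi x y) = 0 ->
    dot 7 (lap Phi x y) w = 0.

Definition isometric_minimal_S2R (Phi : R -> R -> vec) (lam : R -> R -> R) : Prop :=
  smooth 7 Phi /\
  (forall x y, self_dual (Phi x y) /\ dot 6 (Phi x y) (Phi x y) = 1) /\
  isometric 7 Phi lam /\ minimal_S2R Phi.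

(* Hopf differential <(Phi_1)_z, (Phi_1)_z> dz^2 (coefficient); Phi_1 = first six coords *)
Definition hopfS2R (Phi : R -> R -> vec) (x y : R) : C :=
  cdot 6 (dz Phi x y) (dz Phi x y).

(* Let X = phi_x, Y = phi_y, N the unit normal and L = e^(2v) the conformal factor.  The
   Hopf differential makes the second fundamental form constant, <phi_xx, N> = sin t and
   <phi_xy, N> = cos t, so in the frame (X, Y, phi, N) of R^4 the Gauss-Weingarten equations
   are explicit.  Differentiating sqrt 2 nu^+ = X^Y/L + phi^N with them expresses nu^+_x and
   nu^+_y through the bivectors Y^phi + X^N and X^phi - Y^N, which are orthogonal to nu^+ and
   to each other with squared length 2L, and gives Laplacian(nu^+) = -(2L + 2/L) nu^+, i.e.
   minimality in S^2_+.  Hence |nu^+_x|^2 = L + 2 cos t + 1/L, |nu^+_y|^2 = L - 2 cos t + 1/L,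
   <nu^+_x, nu^+_y> = -2 sin t; the line factor 2 Im(z e^(it/2)) adds 4 sin^2(t/2),
   4 cos^2(t/2) and 2 sin t, which yields the metric L + 2 + 1/L = 4 cosh^2 v and the Hopf
   differential e^(it) dz^2. *)

From Stdlib Require Import Reals.
From Coquelicot Require Import Coquelicot.
From Stdlib Require Import Lra Lia FunctionalExtensionality.
Open Scope R_scope.

(** * Linear algebra in R^4 and its second exterior power *)

Lemma inv_sqrt2_sq : / sqrt 2 * / sqrt 2 = / 2.
Proof. rewrite <- Rinv_mult, sqrt_sqrt by lra; reflexivity. Qed.

Lemma sqrt2_neq0 : sqrt 2 <> 0.
Proof. pose proof (sqrt_lt_R0 2 ltac:(lra)); lra. Qed.

Lemma dot4E a b :
  dot 4 a b = a 0%nat * b 0%nat + a 1%nat * b 1%nat + a 2%nat * b 2%nat + a 3%nat * b 3%nat.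
Proof. unfold dot; simpl; ring. Qed.

Lemma dot6E a b :
  dot 6 a b = a 0%nat * b 0%nat + a 1%nat * b 1%nat + a 2%nat * b 2%nat
            + a 3%nat * b 3%nat + a 4%nat * b 4%nat + a 5%nat * b 5%nat.
Proof. unfold dot; simpl; ring. Qed.

Lemma dot7E a b : dot 7 a b = dot 6 a b + a 6%nat * b 6%nat.
Proof. reflexivity. Qed.

Lemma dot_comm n a b : dot n a b = dot n b a.
Proof. unfold dot; induction n as [|n IH]; simpl; [|rewrite IH]; ring. Qed.

Lemma dot_scalel n c a b : dot n (scale c a) b = c * dot n a b.
Proof. unfold dot, scale; induction n as [|n IH]; simpl; [|rewrite IH]; ring. Qed.

Lemma dot_scaler n c a b : dot n a (scale c b) = c * dot n a b.
Proof. unfold dot, scale; induction n as [|n IH]; simpl; [|rewrite IH]; ring. Qed.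

Lemma dot_vaddl n a b c : dot n (vadd a b) c = dot n a c + dot n b c.
Proof. unfold dot, vadd; induction n as [|n IH]; simpl; [|rewrite IH]; ring. Qed.

Lemma dot_vaddr n a b c : dot n c (vadd a b) = dot n c a + dot n c b.
Proof. unfold dot, vadd; induction n as [|n IH]; simpl; [|rewrite IH]; ring. Qed.

Lemma dot_ext n a a' b b' :
  (forall i, (i < n)%nat -> a i = a' i) -> (forall i, (i < n)%nat -> b i = b' i) ->
  dot n a b = dot n a' b'.
Proof.
  unfold dot; induction n as [|n IH]; intros Ea Eb; simpl; [reflexivity|].
  rewrite IH, Ea, Eb by (intros; auto with arith); reflexivity.
Qed.

Lemma wedge_dot a b c d :
  dot 6 (wedge a b) (wedge c d) = dot 4 a c * dot 4 b d - dot 4 a d * dot 4 b c.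
Proof. rewrite dot6E, !dot4E; simpl; ring. Qed.

Lemma wedge_scale c d a b k : wedge (scale c a) (scale d b) k = c * d * wedge a b k.
Proof. unfold wedge, scale; destruct k as [|[|[|[|[|[|k]]]]]]; ring. Qed.

Lemma wedge_extl a a' b k :
  (forall i, (i < 4)%nat -> a i = a' i) -> wedge a b k = wedge a' b k.
Proof. intro E; unfold wedge; rewrite !E by lia; reflexivity. Qed.

Lemma wedge_extr a b b' k :
  (forall i, (i < 4)%nat -> b i = b' i) -> wedge a b k = wedge a b' k.
Proof. intro E; unfold wedge; rewrite !E by lia; reflexivity. Qed.

Lemma cross4_orth1 a b c : dot 4 (cross4 a b c) a = 0.
Proof. rewrite dot4E; unfold cross4, det3; ring. Qed.

Lemma cross4_orth2 a b c : dot 4 (cross4 a b c) b = 0.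
Proof. rewrite dot4E; unfold cross4, det3; ring. Qed.

Lemma cross4_orth3 a b c : dot 4 (cross4 a b c) c = 0.
Proof. rewrite dot4E; unfold cross4, det3; ring. Qed.

Definition det3m (a11 a12 a13 a21 a22 a23 a31 a32 a33 : R) : R :=
  a11 * (a22 * a33 - a23 * a32) - a12 * (a21 * a33 - a23 * a31)
  + a13 * (a21 * a32 - a22 * a31).

Lemma cross4_dot a b c d e f :
  dot 4 (cross4 a b c) (cross4 d e f) =
  det3m (dot 4 a d) (dot 4 a e) (dot 4 a f) (dot 4 b d) (dot 4 b e) (dot 4 b f)
        (dot 4 c d) (dot 4 c e) (dot 4 c f).
Proof. rewrite !dot4E; unfold det3m, cross4, det3; ring. Qed.

(* Cramer's rule for the basis (a, b, c, cross4 a b c) of R^4. *)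
Lemma cross4_cramer a b c d u i : (i < 4)%nat ->
  dot 4 (cross4 a b c) d * u i =
    dot 4 (cross4 u b c) d * a i + dot 4 (cross4 a u c) d * b i
  + dot 4 (cross4 a b u) d * c i + dot 4 (cross4 a b c) u * d i.
Proof.
  intro Hi; rewrite !dot4E; unfold cross4, det3.
  destruct i as [|[|[|[|i]]]]; [ring..|lia].
Qed.

Lemma wedge_cross4 a b c k : (k < 6)%nat ->
  wedge c (cross4 a b c) k =
  dot 4 c c * hodge (wedge a b) k - dot 4 c a * hodge (wedge c b) k
  - dot 4 c b * hodge (wedge a c) k.
Proof.
  intro Hk; rewrite !dot4E; unfold cross4, det3, hodge, wedge.
  destruct k as [|[|[|[|[|[|k]]]]]]; [ring..|lia].
Qed.

Definition conformal_frame (X Y P : vec) (L : R) : Prop :=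
  0 < L /\ dot 4 P P = 1 /\ dot 4 X X = L /\ dot 4 Y Y = L /\ dot 4 X Y = 0 /\
  dot 4 P X = 0 /\ dot 4 P Y = 0.

Definition frame_normal (X Y P : vec) (L : R) : vec := scale (/ L) (cross4 X Y P).

Section ConformalFrame.
Variables (X Y P : vec) (L : R).
Hypothesis HF : conformal_frame X Y P L.

Local Notation N := (frame_normal X Y P L).

Lemma cross4_frame_sq : dot 4 (cross4 X Y P) (cross4 X Y P) = L * L.
Proof.
  destruct HF as (_ & HPP & HXX & HYY & HXY & HPX & HPY).
  rewrite cross4_dot, (dot_comm 4 Y X), (dot_comm 4 X P), (dot_comm 4 Y P).
  rewrite HPP, HXX, HYY, HXY, HPX, HPY; unfold det3m; ring.
Qed.

Lemma vnorm_cross4_frame : vnorm 4 (cross4 X Y P) = L.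
Proof.
  unfold vnorm; rewrite cross4_frame_sq; destruct HF as [HL _].
  rewrite sqrt_square; lra.
Qed.

Lemma frame_normal_orthX : dot 4 N X = 0.
Proof. unfold frame_normal; rewrite dot_scalel, cross4_orth1; ring. Qed.

Lemma frame_normal_orthY : dot 4 N Y = 0.
Proof. unfold frame_normal; rewrite dot_scalel, cross4_orth2; ring. Qed.

Lemma frame_normal_orthP : dot 4 N P = 0.
Proof. unfold frame_normal; rewrite dot_scalel, cross4_orth3; ring. Qed.

Lemma frame_normal_unit : dot 4 N N = 1.
Proof.
  unfold frame_normal; rewrite dot_scalel, dot_scaler, cross4_frame_sq.
  destruct HF as [HL _]; field; lra.
Qed.

Lemma frame_expand u cX cY cP cN :
  dot 4 u X = cX -> dot 4 u Y = cY -> dot 4 u P = cP -> dot 4 u N = cN ->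
  forall i, (i < 4)%nat -> u i = cX / L * X i + cY / L * Y i + cP * P i + cN * N i.
Proof.
  intros <- <- <- <- i Hi.
  pose proof (cross4_cramer X Y P (cross4 X Y P) u i Hi) as C.
  rewrite cross4_frame_sq, !cross4_dot in C.
  destruct HF as (HL & HPP & HXX & HYY & HXY & HPX & HPY).
  rewrite (dot_comm 4 Y X), (dot_comm 4 X P), (dot_comm 4 Y P) in C.
  rewrite HPP, HXX, HYY, HXY, HPX, HPY in C; unfold det3m in C.
  unfold frame_normal; rewrite dot_scaler, (dot_comm 4 u (cross4 X Y P)); unfold scale.
  apply (Rmult_eq_reg_l (L * L)); [|nra].
  rewrite C; field; lra.
Qed.

Lemma wedge_frame_normal k : (k < 6)%nat -> wedge P N k = / L * hodge (wedge X Y) k.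
Proof.
  intro Hk; unfold frame_normal.
  replace (wedge P (scale (/ L) (cross4 X Y P)) k) with (/ L * wedge P (cross4 X Y P) k)
    by (unfold wedge, scale; destruct k as [|[|[|[|[|[|k]]]]]]; ring).
  destruct HF as (_ & HPP & _ & _ & _ & HPX & HPY).
  rewrite wedge_cross4, HPP, HPX, HPY by exact Hk; ring.
Qed.

End ConformalFrame.

(* The bivector sqrt 2 nu^+ and two bivectors spanning its tangent plane in S^2_+. *)
Definition nu_bivec (X Y P N : vec) (L : R) : vec :=
  vadd (scale (/ L) (wedge X Y)) (wedge P N).
Definition tan_bivec1 (X Y P N : vec) : vec := vadd (wedge Y P) (wedge X N).
Definition tan_bivec2 (X Y P N : vec) : vec := vadd (wedge X P) (scale (-1) (wedge Y N)).

Lemma bivec_gram X Y P L : conformal_frame X Y P L ->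
  let N := frame_normal X Y P L in
  let U := nu_bivec X Y P N L in
  let U1 := tan_bivec1 X Y P N in
  let U2 := tan_bivec2 X Y P N in
  dot 6 U U = 2 /\ dot 6 U1 U1 = 2 * L /\ dot 6 U2 U2 = 2 * L /\
  dot 6 U U1 = 0 /\ dot 6 U U2 = 0 /\ dot 6 U1 U2 = 0.
Proof.
  intros HF N U U1 U2.
  pose proof (frame_normal_orthX X Y P L) as HNX.
  pose proof (frame_normal_orthY X Y P L) as HNY.
  pose proof (frame_normal_orthP X Y P L) as HNP.
  pose proof (frame_normal_unit X Y P L HF) as HNN.
  fold N in HNX, HNY, HNP, HNN.
  destruct HF as (HL & HPP & HXX & HYY & HXY & HPX & HPY).
  subst U U1 U2; unfold nu_bivec, tan_bivec1, tan_bivec2.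
  rewrite ?dot_vaddl, ?dot_vaddr, ?dot_scalel, ?dot_scaler, ?wedge_dot.
  rewrite (dot_comm 4 Y X), (dot_comm 4 X P), (dot_comm 4 Y P), (dot_comm 4 X N),
    (dot_comm 4 Y N), (dot_comm 4 P N).
  rewrite HNX, HNY, HNP, HNN, HPP, HXX, HYY, HXY, HPX, HPY.
  repeat split; field; lra.
Qed.

Section FrameEquations.
Context {X Y P N Xx Xy Yy Nx Ny : vec} {L vx vy a b : R}.
Hypothesis HL : L <> 0.
Hypothesis EXx : forall i, (i < 4)%nat -> Xx i = vx * X i - vy * Y i - L * P i + a * N i.
Hypothesis EXy : forall i, (i < 4)%nat -> Xy i = vy * X i + vx * Y i + b * N i.
Hypothesis EYy : forall i, (i < 4)%nat -> Yy i = - vx * X i + vy * Y i - L * P i - a * N i.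
Hypothesis ENx : forall i, (i < 4)%nat -> Nx i = - (a / L) * X i - (b / L) * Y i.
Hypothesis ENy : forall i, (i < 4)%nat -> Ny i = - (b / L) * X i + (a / L) * Y i.

Local Notation U := (nu_bivec X Y P N L).
Local Notation U1 := (tan_bivec1 X Y P N).
Local Notation U2 := (tan_bivec2 X Y P N).

(* Leibniz rule for d/dx of U, with P_x = X and L_x = 2 vx L. *)
Lemma nu_bivec_dx k :
  - (2 * vx / L) * wedge X Y k + / L * (wedge Xx Y k + wedge X Xy k)
  + wedge X N k + wedge P Nx k
  = (1 + b / L) * U1 k + (a / L) * U2 k.
Proof.
  unfold tan_bivec1, tan_bivec2, vadd, scale.
  destruct k as [|[|[|[|[|[|k]]]]]]; unfold wedge;
    [rewrite !EXx, !EXy, !ENx by lia; field; exact HL ..|ring].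
Qed.

Lemma nu_bivec_dy k :
  - (2 * vy / L) * wedge X Y k + / L * (wedge Xy Y k + wedge X Yy k)
  + wedge Y N k + wedge P Ny k
  = (-1 + b / L) * U2 k + (- a / L) * U1 k.
Proof.
  unfold tan_bivec1, tan_bivec2, vadd, scale.
  destruct k as [|[|[|[|[|[|k]]]]]]; unfold wedge;
    [rewrite !EXy, !EYy, !ENy by lia; field; exact HL ..|ring].
Qed.

(* d/dx of the right side of [nu_bivec_dx] plus d/dy of the right side of [nu_bivec_dy]. *)
Lemma nu_bivec_lap k :
    (- 2 * b * vx / L) * U1 k
  + (1 + b / L) * (wedge Xy P k + wedge Y X k + wedge Xx N k + wedge X Nx k)
  + (- 2 * a * vx / L) * U2 k
  + (a / L) * (wedge Xx P k + wedge X X k - (wedge Xy N k + wedge Y Nx k))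
  + (- 2 * b * vy / L) * U2 k
  + (-1 + b / L) * (wedge Xy P k + wedge X Y k - (wedge Yy N k + wedge Y Ny k))
  - ((- 2 * a * vy / L) * U1 k
     + (a / L) * (wedge Yy P k + wedge Y Y k + wedge Xy N k + wedge X Ny k))
  = - (2 * L + 2 * (a * a + b * b) / L) * U k.
Proof.
  unfold nu_bivec, tan_bivec1, tan_bivec2, vadd, scale.
  destruct k as [|[|[|[|[|[|k]]]]]]; unfold wedge;
    [rewrite !EXx, !EXy, !EYy, !ENx, !ENy by lia; field; exact HL ..|ring].
Qed.

End FrameEquations.

(** * Smooth functions of two variables *)

Definition cont_partial (f : R -> R -> R) : Prop := forall x y,
  continuous (fun p : R * R => f (fst p) (snd p)) (x, y) /\
  ex_derive (fun s => f s y) x /\ ex_derive (fun s => f x s) y.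

Fixpoint Cn (n : nat) (f : R -> R -> R) : Prop :=
  match n with
  | O => cont_partial f
  | S m => cont_partial f /\ Cn m (dxs f) /\ Cn m (dys f)
  end.

Definition Cinf (f : R -> R -> R) : Prop := forall n, Cn n f.

Definition vCinf (n : nat) (f : R -> R -> vec) : Prop :=
  forall i, (i < n)%nat -> Cinf (fun x y => f x y i).

Lemma CnS n f : Cn (S n) f -> Cn n f.
Proof.
  revert f; induction n as [|n IH]; intros f Hf; [exact (proj1 Hf)|].
  destruct Hf as (H0 & H1 & H2); split; [exact H0 | split; apply IH; assumption].
Qed.

Lemma Cn_ext n f g : (forall x y, f x y = g x y) -> Cn n f -> Cn n g.
Proof.
  intro E; replace g with f; [auto|].
  apply functional_extensionality; intro x; apply functional_extensionality; auto.
Qed.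

Lemma cont_partial_const c : cont_partial (fun _ _ => c).
Proof.
  intros x y; split; [|split]; [apply continuous_const | apply ex_derive_const ..].
Qed.

Lemma cont_partial_fst : cont_partial (fun x _ => x).
Proof.
  intros x y; split; [|split]; [apply continuous_fst | apply ex_derive_id | apply ex_derive_const].
Qed.

Lemma cont_partial_snd : cont_partial (fun _ y => y).
Proof.
  intros x y; split; [|split]; [apply continuous_snd | apply ex_derive_const | apply ex_derive_id].
Qed.

Lemma cont_partial_plus f g :
  cont_partial f -> cont_partial g -> cont_partial (fun x y => f x y + g x y).
Proof.
  intros Hf Hg x y; destruct (Hf x y) as (Cf & Xf & Yf), (Hg x y) as (Cg & Xg & Yg).
  split; [|split].
  - exact (continuous_plus (fun p : R * R => f (fst p) (snd p))
                           (fun p : R * R => g (fst p) (snd p)) _ Cf Cg).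
  - exact (ex_derive_plus (fun s => f s y) (fun s => g s y) x Xf Xg).
  - exact (ex_derive_plus (fun s => f x s) (fun s => g x s) y Yf Yg).
Qed.

Lemma cont_partial_mult f g :
  cont_partial f -> cont_partial g -> cont_partial (fun x y => f x y * g x y).
Proof.
  intros Hf Hg x y; destruct (Hf x y) as (Cf & Xf & Yf), (Hg x y) as (Cg & Xg & Yg).
  split; [|split].
  - exact (continuous_mult (fun p : R * R => f (fst p) (snd p))
                           (fun p : R * R => g (fst p) (snd p)) _ Cf Cg).
  - exact (ex_derive_mult (fun s => f s y) (fun s => g s y) x Xf Xg).
  - exact (ex_derive_mult (fun s => f x s) (fun s => g x s) y Yf Yg).
Qed.

Lemma cont_partial_inv f :
  (forall x y, f x y <> 0) -> cont_partial f -> cont_partial (fun x y => / f x y).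
Proof.
  intros Hnz Hf x y; destruct (Hf x y) as (Cf & Xf & Yf).
  split; [|split].
  - apply (continuous_comp (fun p : R * R => f (fst p) (snd p)) Rinv); [exact Cf|].
    apply continuous_Rinv, Hnz.
  - exact (ex_derive_inv (fun s => f s y) x Xf (Hnz x y)).
  - exact (ex_derive_inv (fun s => f x s) y Yf (Hnz x y)).
Qed.

Lemma dxs_const c x y : dxs (fun _ _ => c) x y = 0.
Proof. apply (Derive_const c). Qed.

Lemma dys_const c x y : dys (fun _ _ => c) x y = 0.
Proof. apply (Derive_const c). Qed.

Lemma dxs_plus f g x y : cont_partial f -> cont_partial g ->
  dxs (fun a b => f a b + g a b) x y = dxs f x y + dxs g x y.
Proof.
  intros Hf Hg; apply Derive_plus; [exact (proj1 (proj2 (Hf x y))) | exact (proj1 (proj2 (Hg x y)))].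
Qed.

Lemma dys_plus f g x y : cont_partial f -> cont_partial g ->
  dys (fun a b => f a b + g a b) x y = dys f x y + dys g x y.
Proof.
  intros Hf Hg; apply Derive_plus; [exact (proj2 (proj2 (Hf x y))) | exact (proj2 (proj2 (Hg x y)))].
Qed.

Lemma dxs_mult f g x y : cont_partial f -> cont_partial g ->
  dxs (fun a b => f a b * g a b) x y = dxs f x y * g x y + f x y * dxs g x y.
Proof.
  intros Hf Hg; apply Derive_mult; [exact (proj1 (proj2 (Hf x y))) | exact (proj1 (proj2 (Hg x y)))].
Qed.

Lemma dys_mult f g x y : cont_partial f -> cont_partial g ->
  dys (fun a b => f a b * g a b) x y = dys f x y * g x y + f x y * dys g x y.
Proof.
  intros Hf Hg; apply Derive_mult; [exact (proj2 (proj2 (Hf x y))) | exact (proj2 (proj2 (Hg x y)))].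
Qed.

Lemma dxs_inv f x y : (forall a b, f a b <> 0) -> cont_partial f ->
  dxs (fun a b => / f a b) x y = - dxs f x y / (f x y * f x y).
Proof.
  intros Hnz Hf; unfold dxs; rewrite (Derive_inv (fun s => f s y)) by (exact (proj1 (proj2 (Hf x y))) || apply Hnz).
  field; apply Hnz.
Qed.

Lemma dys_inv f x y : (forall a b, f a b <> 0) -> cont_partial f ->
  dys (fun a b => / f a b) x y = - dys f x y / (f x y * f x y).
Proof.
  intros Hnz Hf; unfold dys; rewrite (Derive_inv (fun s => f x s)) by (exact (proj2 (proj2 (Hf x y))) || apply Hnz).
  field; apply Hnz.
Qed.

Lemma Cn_const n c : Cn n (fun _ _ => c).
Proof.
  revert c; induction n as [|n IH]; intro c; [apply cont_partial_const|].
  split; [apply cont_partial_const | split];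
    apply (Cn_ext n (fun _ _ => 0)); [intros; symmetry; apply dxs_const | apply IH
                                     | intros; symmetry; apply dys_const | apply IH].
Qed.

Lemma Cn_plus n : forall f g, Cn n f -> Cn n g -> Cn n (fun x y => f x y + g x y).
Proof.
  induction n as [|n IH]; intros f g Hf Hg; [apply cont_partial_plus; assumption|].
  destruct Hf as (F0 & Fx & Fy), Hg as (G0 & Gx & Gy).
  split; [apply cont_partial_plus; assumption | split].
  - apply (Cn_ext _ (fun x y => dxs f x y + dxs g x y)); [intros; symmetry; apply dxs_plus; assumption|].
    apply IH; assumption.
  - apply (Cn_ext _ (fun x y => dys f x y + dys g x y)); [intros; symmetry; apply dys_plus; assumption|].
    apply IH; assumption.
Qed.

Lemma Cn_mult n : forall f g, Cn n f -> Cn n g -> Cn n (fun x y => f x y * g x y).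
Proof.
  induction n as [|n IH]; intros f g Hf Hg; [apply cont_partial_mult; assumption|].
  pose proof (CnS _ _ Hf) as Hf'; pose proof (CnS _ _ Hg) as Hg'.
  destruct Hf as (F0 & Fx & Fy), Hg as (G0 & Gx & Gy).
  split; [apply cont_partial_mult; assumption | split].
  - apply (Cn_ext _ (fun x y => dxs f x y * g x y + f x y * dxs g x y));
      [intros; symmetry; apply dxs_mult; assumption|].
    apply Cn_plus; apply IH; assumption.
  - apply (Cn_ext _ (fun x y => dys f x y * g x y + f x y * dys g x y));
      [intros; symmetry; apply dys_mult; assumption|].
    apply Cn_plus; apply IH; assumption.
Qed.

Lemma Cn_inv n : forall f, (forall x y, f x y <> 0) -> Cn n f -> Cn n (fun x y => / f x y).
Proof.
  induction n as [|n IH]; intros f Hnz Hf; [apply cont_partial_inv; assumption|].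
  pose proof (CnS _ _ Hf) as Hf'; destruct Hf as (F0 & Fx & Fy).
  assert (Hsq : Cn n (fun x y => / f x y * / f x y)) by (apply Cn_mult; apply IH; assumption).
  split; [apply cont_partial_inv; assumption | split].
  - apply (Cn_ext _ (fun x y => - dxs f x y * (/ f x y * / f x y)));
      [intros; rewrite dxs_inv by assumption; field; apply Hnz|].
    apply Cn_mult; [|exact Hsq].
    apply (Cn_ext _ (fun x y => -1 * dxs f x y)); [intros; ring|].
    apply Cn_mult; [apply Cn_const | exact Fx].
  - apply (Cn_ext _ (fun x y => - dys f x y * (/ f x y * / f x y)));
      [intros; rewrite dys_inv by assumption; field; apply Hnz|].
    apply Cn_mult; [|exact Hsq].
    apply (Cn_ext _ (fun x y => -1 * dys f x y)); [intros; ring|].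
    apply Cn_mult; [apply Cn_const | exact Fy].
Qed.

Lemma Cn_fst n : Cn n (fun x _ => x).
Proof.
  destruct n as [|n]; [apply cont_partial_fst|].
  split; [apply cont_partial_fst | split].
  - apply (Cn_ext _ (fun _ _ => 1)); [intros a b; symmetry; apply (Derive_id a) | apply Cn_const].
  - apply (Cn_ext _ (fun _ _ => 0)); [intros a b; symmetry; apply (Derive_const a) | apply Cn_const].
Qed.

Lemma Cn_snd n : Cn n (fun _ y => y).
Proof.
  destruct n as [|n]; [apply cont_partial_snd|].
  split; [apply cont_partial_snd | split].
  - apply (Cn_ext _ (fun _ _ => 0)); [intros a b; symmetry; apply (Derive_const b) | apply Cn_const].
  - apply (Cn_ext _ (fun _ _ => 1)); [intros a b; symmetry; apply (Derive_id b) | apply Cn_const].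
Qed.

Lemma Cinf_cont_partial f : Cinf f -> cont_partial f.
Proof. intro F; exact (F O). Qed.

Lemma Cinf_ext f g : (forall x y, f x y = g x y) -> Cinf f -> Cinf g.
Proof. intros E F n; exact (Cn_ext n f g E (F n)). Qed.

Lemma Cinf_const c : Cinf (fun _ _ => c).
Proof. intro n; apply Cn_const. Qed.

Lemma Cinf_fst : Cinf (fun x _ => x).
Proof. intro n; apply Cn_fst. Qed.

Lemma Cinf_snd : Cinf (fun _ y => y).
Proof. intro n; apply Cn_snd. Qed.

Lemma Cinf_plus f g : Cinf f -> Cinf g -> Cinf (fun x y => f x y + g x y).
Proof. intros F G n; apply Cn_plus; auto. Qed.

Lemma Cinf_mult f g : Cinf f -> Cinf g -> Cinf (fun x y => f x y * g x y).
Proof. intros F G n; apply Cn_mult; auto. Qed.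

Lemma Cinf_inv f : (forall x y, f x y <> 0) -> Cinf f -> Cinf (fun x y => / f x y).
Proof. intros Hnz F n; apply Cn_inv; auto. Qed.

Lemma Cinf_opp f : Cinf f -> Cinf (fun x y => - f x y).
Proof.
  intro F; apply (Cinf_ext (fun x y => -1 * f x y)); [intros; ring|].
  apply Cinf_mult; [apply Cinf_const | exact F].
Qed.

Lemma Cinf_minus f g : Cinf f -> Cinf g -> Cinf (fun x y => f x y - g x y).
Proof. intros F G; apply Cinf_plus; [exact F | apply Cinf_opp, G]. Qed.

Lemma Cinf_dxs f : Cinf f -> Cinf (dxs f).
Proof. intros F n; exact (proj1 (proj2 (F (S n)))). Qed.

Lemma Cinf_dys f : Cinf f -> Cinf (dys f).
Proof. intros F n; exact (proj2 (proj2 (F (S n)))). Qed.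

Lemma smooth_vCinf n f : smooth n f <-> vCinf n f.
Proof.
  split.
  - intros (S & Sf & HS).
    assert (Hm : forall m g, S g -> forall i, (i < n)%nat -> Cn m (fun x y => g x y i)).
    { induction m as [|m IH]; intros g Sg i Hi; destruct (HS g Sg) as (Hg & Sx & Sy).
      - intros x y; exact (Hg i x y Hi).
      - split; [|split]; [intros x y; exact (Hg i x y Hi) | apply (IH _ Sx i Hi) | apply (IH _ Sy i Hi)]. }
    intros i Hi m; apply Hm; assumption.
  - intro Hf; exists (vCinf n); split; [exact Hf|].
    intros g Hg; split; [|split].
    + intros i x y Hi; exact (Cinf_cont_partial _ (Hg i Hi) x y).
    + intros i Hi; apply (Cinf_dxs (fun a b => g a b i)), Hg, Hi.
    + intros i Hi; apply (Cinf_dys (fun a b => g a b i)), Hg, Hi.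
Qed.

Lemma vCinf_dx n f : vCinf n f -> vCinf n (dx f).
Proof. intros H i Hi; apply (Cinf_dxs (fun a b => f a b i)), H, Hi. Qed.

Lemma vCinf_dy n f : vCinf n f -> vCinf n (dy f).
Proof. intros H i Hi; apply (Cinf_dys (fun a b => f a b i)), H, Hi. Qed.

Ltac cinf :=
  repeat first
    [ assumption | apply Cinf_cont_partial | apply Cinf_plus | apply Cinf_minus
    | apply Cinf_mult | apply Cinf_opp | apply Cinf_const ].

Lemma Cinf_wedge A B k : vCinf 4 A -> vCinf 4 B -> Cinf (fun x y => wedge (A x y) (B x y) k).
Proof.
  intros HA HB.
  pose proof (HA 0%nat ltac:(lia)); pose proof (HA 1%nat ltac:(lia));
  pose proof (HA 2%nat ltac:(lia)); pose proof (HA 3%nat ltac:(lia));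
  pose proof (HB 0%nat ltac:(lia)); pose proof (HB 1%nat ltac:(lia));
  pose proof (HB 2%nat ltac:(lia)); pose proof (HB 3%nat ltac:(lia)).
  destruct k as [|[|[|[|[|[|k]]]]]]; unfold wedge; cinf.
Qed.

Lemma Cinf_cross4 A B C k : vCinf 4 A -> vCinf 4 B -> vCinf 4 C ->
  Cinf (fun x y => cross4 (A x y) (B x y) (C x y) k).
Proof.
  intros HA HB HC.
  pose proof (HA 0%nat ltac:(lia)); pose proof (HA 1%nat ltac:(lia));
  pose proof (HA 2%nat ltac:(lia)); pose proof (HA 3%nat ltac:(lia));
  pose proof (HB 0%nat ltac:(lia)); pose proof (HB 1%nat ltac:(lia));
  pose proof (HB 2%nat ltac:(lia)); pose proof (HB 3%nat ltac:(lia));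
  pose proof (HC 0%nat ltac:(lia)); pose proof (HC 1%nat ltac:(lia));
  pose proof (HC 2%nat ltac:(lia)); pose proof (HC 3%nat ltac:(lia)).
  destruct k as [|[|[|[|k]]]]; unfold cross4, det3; cinf.
Qed.

Lemma Cinf_dot n A B : vCinf n A -> vCinf n B -> Cinf (fun x y => dot n (A x y) (B x y)).
Proof.
  unfold dot; induction n as [|n IH]; intros HA HB; simpl; [apply Cinf_const|].
  apply Cinf_plus; [apply IH | apply Cinf_mult].
  - intros i Hi; apply HA; lia.
  - intros i Hi; apply HB; lia.
  - apply HA; lia.
  - apply HB; lia.
Qed.

Lemma is_derive_dot n (F G : R -> vec) s :
  (forall i, (i < n)%nat -> ex_derive (fun u => F u i) s) ->
  (forall i, (i < n)%nat -> ex_derive (fun u => G u i) s) ->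
  is_derive (fun u => dot n (F u) (G u)) s
    (dot n (fun i => Derive (fun u => F u i) s) (G s)
     + dot n (F s) (fun i => Derive (fun u => G u i) s)).
Proof.
  unfold dot; induction n as [|n IH]; intros HF HG; simpl.
  - rewrite Rplus_0_l; apply (is_derive_const (V := R_NormedModule) 0).
  - set (dF := Derive (fun u => F u n) s); set (dG := Derive (fun u => G u n) s).
    replace (_ + _) with
      ((sumn n (fun i => Derive (fun u => F u i) s * G s i)
        + sumn n (fun i => F s i * Derive (fun u => G u i) s))
       + (dF * G s n + F s n * dG)) by ring.
    apply (is_derive_plus (fun u => sumn n (fun i => F u i * G u i)) (fun u => F u n * G u n)).
    + apply IH; intros i Hi; [apply HF | apply HG]; lia.
    + apply (is_derive_mult (fun u => F u n) (fun u => G u n));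
        [apply Derive_correct, HF; lia | apply Derive_correct, HG; lia | intros; apply Rmult_comm].
Qed.

Lemma dx_dot n A B x y : vCinf n A -> vCinf n B ->
  dxs (fun a b => dot n (A a b) (B a b)) x y
  = dot n (dx A x y) (B x y) + dot n (A x y) (dx B x y).
Proof.
  intros HA HB; apply is_derive_unique, is_derive_dot; intros i Hi;
    [exact (proj1 (proj2 (Cinf_cont_partial _ (HA i Hi) x y)))
    | exact (proj1 (proj2 (Cinf_cont_partial _ (HB i Hi) x y)))].
Qed.

Lemma dy_dot n A B x y : vCinf n A -> vCinf n B ->
  dys (fun a b => dot n (A a b) (B a b)) x y
  = dot n (dy A x y) (B x y) + dot n (A x y) (dy B x y).
Proof.
  intros HA HB; apply is_derive_unique, is_derive_dot; intros i Hi;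
    [exact (proj2 (proj2 (Cinf_cont_partial _ (HA i Hi) x y)))
    | exact (proj2 (proj2 (Cinf_cont_partial _ (HB i Hi) x y)))].
Qed.

Lemma dx_dot_const n A B c x y : vCinf n A -> vCinf n B ->
  (forall a b, dot n (A a b) (B a b) = c) ->
  dot n (dx A x y) (B x y) + dot n (A x y) (dx B x y) = 0.
Proof.
  intros HA HB Hc; rewrite <- dx_dot by assumption; unfold dxs.
  rewrite (Derive_ext _ (fun _ => c)) by auto; apply Derive_const.
Qed.

Lemma dy_dot_const n A B c x y : vCinf n A -> vCinf n B ->
  (forall a b, dot n (A a b) (B a b) = c) ->
  dot n (dy A x y) (B x y) + dot n (A x y) (dy B x y) = 0.
Proof.
  intros HA HB Hc; rewrite <- dy_dot by assumption; unfold dys.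
  rewrite (Derive_ext _ (fun _ => c)) by auto; apply Derive_const.
Qed.

Lemma Derive_wedge (A B : R -> vec) s k :
  (forall i, (i < 4)%nat -> ex_derive (fun u => A u i) s) ->
  (forall i, (i < 4)%nat -> ex_derive (fun u => B u i) s) ->
  Derive (fun u => wedge (A u) (B u) k) s
  = wedge (fun i => Derive (fun u => A u i) s) (B s) k
  + wedge (A s) (fun i => Derive (fun u => B u i) s) k.
Proof.
  intros HA HB.
  pose proof (HA 0%nat ltac:(lia)); pose proof (HA 1%nat ltac:(lia));
  pose proof (HA 2%nat ltac:(lia)); pose proof (HA 3%nat ltac:(lia));
  pose proof (HB 0%nat ltac:(lia)); pose proof (HB 1%nat ltac:(lia));
  pose proof (HB 2%nat ltac:(lia)); pose proof (HB 3%nat ltac:(lia)).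
  destruct k as [|[|[|[|[|[|k]]]]]]; unfold wedge;
    [ rewrite Derive_minus by (apply ex_derive_mult; assumption);
      rewrite !Derive_mult by assumption; ring ..
    | rewrite Derive_const; ring ].
Qed.

Lemma dx_wedge A B x y k : vCinf 4 A -> vCinf 4 B ->
  dxs (fun a b => wedge (A a b) (B a b) k) x y
  = wedge (dx A x y) (B x y) k + wedge (A x y) (dx B x y) k.
Proof.
  intros HA HB; apply Derive_wedge; intros i Hi;
    [exact (proj1 (proj2 (Cinf_cont_partial _ (HA i Hi) x y)))
    | exact (proj1 (proj2 (Cinf_cont_partial _ (HB i Hi) x y)))].
Qed.

Lemma dy_wedge A B x y k : vCinf 4 A -> vCinf 4 B ->
  dys (fun a b => wedge (A a b) (B a b) k) x y
  = wedge (dy A x y) (B x y) k + wedge (A x y) (dy B x y) k.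
Proof.
  intros HA HB; apply Derive_wedge; intros i Hi;
    [exact (proj2 (proj2 (Cinf_cont_partial _ (HA i Hi) x y)))
    | exact (proj2 (proj2 (Cinf_cont_partial _ (HB i Hi) x y)))].
Qed.

Lemma dxs_dys_comm f x y : Cinf f -> dxs (dys f) x y = dys (dxs f) x y.
Proof.
  intro F; unfold dxs, dys; apply Schwarz.
  - exists (mkposreal 1 Rlt_0_1); intros u w _ _.
    split; [exact (proj1 (proj2 (Cinf_cont_partial f F u w)))|].
    split; [exact (proj2 (proj2 (Cinf_cont_partial f F u w)))|].
    split; [exact (proj1 (proj2 (Cinf_cont_partial _ (Cinf_dys f F) u w)))|].
    exact (proj2 (proj2 (Cinf_cont_partial _ (Cinf_dxs f F) u w))).
  - apply continuity_2d_pt_filterlim, (Cinf_cont_partial _ (Cinf_dxs _ (Cinf_dys f F))).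
  - apply continuity_2d_pt_filterlim, (Cinf_cont_partial _ (Cinf_dys _ (Cinf_dxs f F))).
Qed.

Lemma dxs_ext f g x y : (forall a b, f a b = g a b) -> dxs f x y = dxs g x y.
Proof. intro E; apply Derive_ext; auto. Qed.

Lemma dys_ext f g x y : (forall a b, f a b = g a b) -> dys f x y = dys g x y.
Proof. intro E; apply Derive_ext; auto. Qed.

Lemma dxs_sq_norm n A f x y : vCinf n A -> (forall a b, dot n (A a b) (A a b) = f a b) ->
  dxs f x y = 2 * dot n (dx A x y) (A x y).
Proof.
  intros HA Hf; rewrite <- (dxs_ext _ _ x y Hf), dx_dot, (dot_comm n (A x y)) by exact HA; ring.
Qed.

Lemma dys_sq_norm n A f x y : vCinf n A -> (forall a b, dot n (A a b) (A a b) = f a b) ->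
  dys f x y = 2 * dot n (dy A x y) (A x y).
Proof.
  intros HA Hf; rewrite <- (dys_ext _ _ x y Hf), dy_dot, (dot_comm n (A x y)) by exact HA; ring.
Qed.

(** * Structure equations of a minimal surface in S^3 with constant Hopf differential *)

(* Hopf differential (i/2)(b + i a) dz^2 (for phi_t, a = sin t and b = cos t).  Then a and b
   turn out to be <phi_xx, N> and <phi_xy, N>. *)
Definition const_hopf_minimal_S3 (phi : R -> R -> vec) (L : R -> R -> R) (a b : R) : Prop :=
  isometric_minimal_S3 phi L /\ (forall x y, 0 < L x y) /\
  (forall x y, hopfS3 phi x y = Cmult (0, / 2) (b, a)).

Section StructureEquations.
Variables (phi : R -> R -> vec) (L : R -> R -> R) (a b : R).
Hypothesis Hphi : const_hopf_minimal_S3 phi L a b.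

Local Notation X := (dx phi).
Local Notation Y := (dy phi).
Local Notation N := (normalS3 phi).

Lemma phi_smooth : vCinf 4 phi.
Proof. apply smooth_vCinf, Hphi. Qed.

Let X_smooth := vCinf_dx 4 phi phi_smooth.
Let Y_smooth := vCinf_dy 4 phi phi_smooth.

Lemma L_pos x y : 0 < L x y.
Proof. apply Hphi. Qed.

Lemma L_neq0 x y : L x y <> 0.
Proof. pose proof (L_pos x y); lra. Qed.

Lemma phi_unit x y : dot 4 (phi x y) (phi x y) = 1.
Proof. apply Hphi. Qed.

Lemma phi_XX x y : dot 4 (X x y) (X x y) = L x y.
Proof. apply Hphi. Qed.

Lemma phi_YY x y : dot 4 (Y x y) (Y x y) = L x y.
Proof. apply Hphi. Qed.

Lemma phi_XY x y : dot 4 (X x y) (Y x y) = 0.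
Proof. apply Hphi. Qed.

Lemma phi_PX x y : dot 4 (phi x y) (X x y) = 0.
Proof.
  pose proof (dx_dot_const 4 phi phi 1 x y phi_smooth phi_smooth phi_unit) as E.
  rewrite dot_comm in E; lra.
Qed.

Lemma phi_PY x y : dot 4 (phi x y) (Y x y) = 0.
Proof.
  pose proof (dy_dot_const 4 phi phi 1 x y phi_smooth phi_smooth phi_unit) as E.
  rewrite dot_comm in E; lra.
Qed.

Lemma phi_frame x y : conformal_frame (X x y) (Y x y) (phi x y) (L x y).
Proof.
  repeat split;
    [apply L_pos | apply phi_unit | apply phi_XX | apply phi_YY | apply phi_XY
    | apply phi_PX | apply phi_PY].
Qed.

Lemma normalS3_frame x y : N x y = frame_normal (X x y) (Y x y) (phi x y) (L x y).
Proof. unfold normalS3; rewrite (vnorm_cross4_frame _ _ _ _ (phi_frame x y)); reflexivity. Qed.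

Lemma L_smooth : Cinf L.
Proof.
  apply (Cinf_ext (fun x y => dot 4 (X x y) (X x y))); [apply phi_XX|].
  apply Cinf_dot; exact X_smooth.
Qed.

Lemma N_smooth : vCinf 4 N.
Proof.
  intros i Hi.
  apply (Cinf_ext (fun x y => / L x y * cross4 (X x y) (Y x y) (phi x y) i));
    [intros; rewrite normalS3_frame; reflexivity|].
  apply Cinf_mult; [apply Cinf_inv; [apply L_neq0 | apply L_smooth]|].
  apply Cinf_cross4; [exact X_smooth | exact Y_smooth | exact phi_smooth].
Qed.

Lemma N_orthX x y : dot 4 (N x y) (X x y) = 0.
Proof. rewrite normalS3_frame; apply frame_normal_orthX. Qed.

Lemma N_orthY x y : dot 4 (N x y) (Y x y) = 0.
Proof. rewrite normalS3_frame; apply frame_normal_orthY. Qed.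

Lemma N_orthP x y : dot 4 (N x y) (phi x y) = 0.
Proof. rewrite normalS3_frame; apply frame_normal_orthP. Qed.

Lemma N_unit x y : dot 4 (N x y) (N x y) = 1.
Proof. rewrite normalS3_frame; apply frame_normal_unit, phi_frame. Qed.

Lemma frame_expand_at x y u cX cY cP cN :
  dot 4 u (X x y) = cX -> dot 4 u (Y x y) = cY -> dot 4 u (phi x y) = cP ->
  dot 4 u (N x y) = cN ->
  forall i, (i < 4)%nat ->
  u i = cX / L x y * X x y i + cY / L x y * Y x y i + cP * phi x y i + cN * N x y i.
Proof. rewrite normalS3_frame; apply frame_expand, phi_frame. Qed.

Lemma dxY_dyX x y i : (i < 4)%nat -> dx Y x y i = dy X x y i.
Proof. intro Hi; exact (dxs_dys_comm (fun a b => phi a b i) x y (phi_smooth i Hi)). Qed.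

Lemma dot_dxY c x y : dot 4 (dx Y x y) c = dot 4 (dy X x y) c.
Proof. apply dot_ext; [apply dxY_dyX | reflexivity]. Qed.

Lemma dxs_L x y : dxs L x y = 2 * dot 4 (dx X x y) (X x y).
Proof. exact (dxs_sq_norm 4 X L x y X_smooth phi_XX). Qed.

Lemma dys_L x y : dys L x y = 2 * dot 4 (dy X x y) (X x y).
Proof. exact (dys_sq_norm 4 X L x y X_smooth phi_XX). Qed.

Lemma dxs_L_Y x y : dxs L x y = 2 * dot 4 (dx Y x y) (Y x y).
Proof. exact (dxs_sq_norm 4 Y L x y Y_smooth phi_YY). Qed.

Lemma dys_L_Y x y : dys L x y = 2 * dot 4 (dy Y x y) (Y x y).
Proof. exact (dys_sq_norm 4 Y L x y Y_smooth phi_YY). Qed.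

Lemma minimal_normal x y : dot 4 (dx X x y) (N x y) + dot 4 (dy Y x y) (N x y) = 0.
Proof.
  destruct Hphi as ((_ & _ & _ & Hmin) & _).
  pose proof (Hmin x y (N x y) (N_orthP x y)) as E.
  unfold lap in E; rewrite dot_vaddl in E; exact E.
Qed.

Lemma hopf_normal_derivs x y :
  dot 4 (X x y) (dx N x y) - dot 4 (Y x y) (dy N x y) = - 2 * a /\
  dot 4 (X x y) (dy N x y) + dot 4 (Y x y) (dx N x y) = - 2 * b.
Proof.
  destruct Hphi as (_ & _ & Hhopf).
  pose proof (Hhopf x y) as E; unfold hopfS3, cdot, dz in E; simpl in E.
  rewrite !dot_scalel, !dot_scaler in E; injection E as E1 E2; split; lra.
Qed.

Lemma second_fundamental_xx x y : dot 4 (dx X x y) (N x y) = a.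
Proof.
  destruct (hopf_normal_derivs x y) as [E _].
  pose proof (dx_dot_const 4 N X 0 x y N_smooth X_smooth N_orthX).
  pose proof (dy_dot_const 4 N Y 0 x y N_smooth Y_smooth N_orthY).
  pose proof (minimal_normal x y).
  rewrite !(dot_comm 4 (N x y)), (dot_comm 4 (X x y)), (dot_comm 4 (Y x y)) in *; lra.
Qed.

Lemma second_fundamental_xy x y : dot 4 (dy X x y) (N x y) = b.
Proof.
  destruct (hopf_normal_derivs x y) as [_ E].
  pose proof (dy_dot_const 4 N X 0 x y N_smooth X_smooth N_orthX).
  pose proof (dx_dot_const 4 N Y 0 x y N_smooth Y_smooth N_orthY).
  rewrite !(dot_comm 4 (N x y)), (dot_comm 4 (X x y)), (dot_comm 4 (Y x y)), dot_dxY in *; lra.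
Qed.

Lemma second_fundamental_yy x y : dot 4 (dy Y x y) (N x y) = - a.
Proof. pose proof (minimal_normal x y); pose proof (second_fundamental_xx x y); lra. Qed.

(* When L = e^(2v), these are v_x and v_y. *)
Let vx x y := dxs L x y / (2 * L x y).
Let vy x y := dys L x y / (2 * L x y).

Lemma dx_X x y i : (i < 4)%nat ->
  dx X x y i = vx x y * X x y i - vy x y * Y x y i - L x y * phi x y i + a * N x y i.
Proof.
  intro Hi; pose proof (L_neq0 x y).
  assert (HX : dot 4 (dx X x y) (X x y) = vx x y * L x y).
  { unfold vx; rewrite dxs_L; field; assumption. }
  assert (HY : dot 4 (dx X x y) (Y x y) = - (vy x y * L x y)).
  { pose proof (dx_dot_const 4 X Y 0 x y X_smooth Y_smooth phi_XY) as E.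
    rewrite (dot_comm 4 (X x y)), dot_dxY in E; unfold vy; rewrite dys_L; field_simplify; lra. }
  assert (HP : dot 4 (dx X x y) (phi x y) = - L x y).
  { pose proof (dx_dot_const 4 phi X 0 x y phi_smooth X_smooth phi_PX) as E.
    rewrite phi_XX, dot_comm in E; lra. }
  rewrite (frame_expand_at x y _ _ _ _ _ HX HY HP (second_fundamental_xx x y) i Hi).
  field; assumption.
Qed.

Lemma dy_X x y i : (i < 4)%nat ->
  dy X x y i = vy x y * X x y i + vx x y * Y x y i + b * N x y i.
Proof.
  intro Hi; pose proof (L_neq0 x y).
  assert (HX : dot 4 (dy X x y) (X x y) = vy x y * L x y).
  { unfold vy; rewrite dys_L; field; assumption. }
  assert (HY : dot 4 (dy X x y) (Y x y) = vx x y * L x y).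
  { unfold vx; rewrite dxs_L_Y, dot_dxY; field; assumption. }
  assert (HP : dot 4 (dy X x y) (phi x y) = 0).
  { pose proof (dy_dot_const 4 phi X 0 x y phi_smooth X_smooth phi_PX) as E.
    rewrite (dot_comm 4 (Y x y)), phi_XY, dot_comm in E; lra. }
  rewrite (frame_expand_at x y _ _ _ _ _ HX HY HP (second_fundamental_xy x y) i Hi).
  field; assumption.
Qed.

Lemma dy_Y x y i : (i < 4)%nat ->
  dy Y x y i = - vx x y * X x y i + vy x y * Y x y i - L x y * phi x y i - a * N x y i.
Proof.
  intro Hi; pose proof (L_neq0 x y).
  assert (HX : dot 4 (dy Y x y) (X x y) = - (vx x y * L x y)).
  { pose proof (dy_dot_const 4 X Y 0 x y X_smooth Y_smooth phi_XY) as E.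
    rewrite (dot_comm 4 (X x y)), <- dot_dxY in E; unfold vx; rewrite dxs_L_Y; field_simplify; lra. }
  assert (HY : dot 4 (dy Y x y) (Y x y) = vy x y * L x y).
  { unfold vy; rewrite dys_L_Y; field; assumption. }
  assert (HP : dot 4 (dy Y x y) (phi x y) = - L x y).
  { pose proof (dy_dot_const 4 phi Y 0 x y phi_smooth Y_smooth phi_PY) as E.
    rewrite phi_YY, dot_comm in E; lra. }
  rewrite (frame_expand_at x y _ _ _ _ _ HX HY HP (second_fundamental_yy x y) i Hi).
  field; assumption.
Qed.

Lemma dx_N x y i : (i < 4)%nat ->
  dx N x y i = - (a / L x y) * X x y i - (b / L x y) * Y x y i.
Proof.
  intro Hi; pose proof (L_neq0 x y).
  assert (HX : dot 4 (dx N x y) (X x y) = - a).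
  { pose proof (dx_dot_const 4 N X 0 x y N_smooth X_smooth N_orthX) as E.
    rewrite (dot_comm 4 (N x y)), second_fundamental_xx in E; lra. }
  assert (HY : dot 4 (dx N x y) (Y x y) = - b).
  { pose proof (dx_dot_const 4 N Y 0 x y N_smooth Y_smooth N_orthY) as E.
    rewrite (dot_comm 4 (N x y)), dot_dxY, second_fundamental_xy in E; lra. }
  assert (HP : dot 4 (dx N x y) (phi x y) = 0).
  { pose proof (dx_dot_const 4 N phi 0 x y N_smooth phi_smooth N_orthP) as E.
    rewrite N_orthX in E; lra. }
  assert (HN : dot 4 (dx N x y) (N x y) = 0).
  { pose proof (dx_dot_const 4 N N 1 x y N_smooth N_smooth N_unit) as E.
    rewrite (dot_comm 4 (N x y)) in E; lra. }
  rewrite (frame_expand_at x y _ _ _ _ _ HX HY HP HN i Hi).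
  field; assumption.
Qed.

Lemma dy_N x y i : (i < 4)%nat ->
  dy N x y i = - (b / L x y) * X x y i + (a / L x y) * Y x y i.
Proof.
  intro Hi; pose proof (L_neq0 x y).
  assert (HX : dot 4 (dy N x y) (X x y) = - b).
  { pose proof (dy_dot_const 4 N X 0 x y N_smooth X_smooth N_orthX) as E.
    rewrite (dot_comm 4 (N x y)), second_fundamental_xy in E; lra. }
  assert (HY : dot 4 (dy N x y) (Y x y) = a).
  { pose proof (dy_dot_const 4 N Y 0 x y N_smooth Y_smooth N_orthY) as E.
    rewrite (dot_comm 4 (N x y)), second_fundamental_yy in E; lra. }
  assert (HP : dot 4 (dy N x y) (phi x y) = 0).
  { pose proof (dy_dot_const 4 N phi 0 x y N_smooth phi_smooth N_orthP) as E.
    rewrite N_orthY in E; lra. }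
  assert (HN : dot 4 (dy N x y) (N x y) = 0).
  { pose proof (dy_dot_const 4 N N 1 x y N_smooth N_smooth N_unit) as E.
    rewrite (dot_comm 4 (N x y)) in E; lra. }
  rewrite (frame_expand_at x y _ _ _ _ _ HX HY HP HN i Hi).
  field; assumption.
Qed.

Local Notation U x y := (nu_bivec (X x y) (Y x y) (phi x y) (N x y) (L x y)).
Local Notation U1 x y := (tan_bivec1 (X x y) (Y x y) (phi x y) (N x y)).
Local Notation U2 x y := (tan_bivec2 (X x y) (Y x y) (phi x y) (N x y)).

Lemma nu_plus_bivec x y k : nu_plus phi x y k = / sqrt 2 * U x y k.
Proof.
  assert (HX : vnorm 4 (X x y) = sqrt (L x y)) by (unfold vnorm; rewrite phi_XX; reflexivity).
  assert (HY : vnorm 4 (Y x y) = sqrt (L x y)) by (unfold vnorm; rewrite phi_YY; reflexivity).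
  unfold nu_plus; cbv zeta; rewrite HX, HY; unfold scale at 1, vadd at 1.
  rewrite wedge_scale; unfold nu_bivec, vadd, scale.
  rewrite <- Rinv_mult, sqrt_sqrt by (left; apply L_pos); reflexivity.
Qed.

Ltac frame_smooth :=
  repeat first
    [ assumption | apply L_neq0 | apply Cinf_cont_partial | apply Cinf_const | apply Cinf_inv
    | apply L_smooth | apply Cinf_wedge | apply Cinf_plus | apply Cinf_mult
    | apply phi_smooth | apply N_smooth | apply vCinf_dx | apply vCinf_dy ].

Lemma dx_nu x y k :
  dx (nu_plus phi) x y k = / sqrt 2 * ((1 + b / L x y) * U1 x y k + (a / L x y) * U2 x y k).
Proof.
  rewrite <- (nu_bivec_dx (L_neq0 x y) (dx_X x y) (dy_X x y) (dx_N x y)).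
  unfold dx at 1; rewrite (dxs_ext _ _ x y (fun a b => nu_plus_bivec a b k)).
  unfold nu_bivec, vadd, scale.
  rewrite dxs_mult, dxs_const, dxs_plus, dxs_mult, dxs_inv, !dx_wedge by frame_smooth.
  rewrite (wedge_extr (X x y) (dx Y x y) (dy X x y)) by apply dxY_dyX.
  unfold vx; field; split; [apply L_neq0 | apply sqrt2_neq0].
Qed.

Lemma dy_nu x y k :
  dy (nu_plus phi) x y k = / sqrt 2 * ((-1 + b / L x y) * U2 x y k + (- a / L x y) * U1 x y k).
Proof.
  rewrite <- (nu_bivec_dy (L_neq0 x y) (dy_X x y) (dy_Y x y) (dy_N x y)).
  unfold dy at 1; rewrite (dys_ext _ _ x y (fun a b => nu_plus_bivec a b k)).
  unfold nu_bivec, vadd, scale.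
  rewrite dys_mult, dys_const, dys_plus, dys_mult, dys_inv, !dy_wedge by frame_smooth.
  unfold vy; field; split; [apply L_neq0 | apply sqrt2_neq0].
Qed.

Lemma lap_nu x y k :
  lap (nu_plus phi) x y k
  = - (2 * L x y + 2 * (a * a + b * b) / L x y) * nu_plus phi x y k.
Proof.
  unfold lap, vadd at 1, dx at 1, dy at 1.
  rewrite (dxs_ext _ _ x y (fun a b => dx_nu a b k)), (dys_ext _ _ x y (fun a b => dy_nu a b k)).
  unfold tan_bivec1, tan_bivec2, vadd, scale, Rdiv.
  repeat first
    [ rewrite dxs_const | rewrite dys_const | rewrite dxs_mult | rewrite dys_mult
    | rewrite dxs_plus | rewrite dys_plus | rewrite dxs_inv | rewrite dys_inv
    | rewrite dx_wedge | rewrite dy_wedge ]; frame_smooth.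
  rewrite !(wedge_extl (dx Y x y) (dy X x y)) by apply dxY_dyX.
  pose proof (nu_bivec_lap (L_neq0 x y) (dx_X x y) (dy_X x y) (dy_Y x y) (dx_N x y) (dy_N x y) k)
    as I.
  rewrite nu_plus_bivec.
  match type of I with ?l = _ => transitivity (/ sqrt 2 * l) end.
  - unfold tan_bivec1, tan_bivec2, vadd, scale, vx, vy.
    field; split; [apply L_neq0 | apply sqrt2_neq0].
  - rewrite I; unfold Rdiv; ring.
Qed.

Lemma nu_gram x y :
  dot 6 (U x y) (U x y) = 2 /\ dot 6 (U1 x y) (U1 x y) = 2 * L x y /\
  dot 6 (U2 x y) (U2 x y) = 2 * L x y /\ dot 6 (U x y) (U1 x y) = 0 /\
  dot 6 (U x y) (U2 x y) = 0 /\ dot 6 (U1 x y) (U2 x y) = 0.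
Proof. rewrite normalS3_frame; exact (bivec_gram _ _ _ _ (phi_frame x y)). Qed.

Lemma nu_unit x y : dot 6 (nu_plus phi x y) (nu_plus phi x y) = 1.
Proof.
  rewrite (dot_ext 6 _ (scale (/ sqrt 2) (U x y)) _ (scale (/ sqrt 2) (U x y)))
    by (intros; apply nu_plus_bivec).
  rewrite dot_scalel, dot_scaler, (proj1 (nu_gram x y)), <- Rmult_assoc, inv_sqrt2_sq; field.
Qed.

Lemma nu_self_dual x y : self_dual (nu_plus phi x y).
Proof.
  pose proof (fun j Hj => wedge_frame_normal _ _ _ _ (phi_frame x y) j Hj) as E.
  rewrite <- normalS3_frame in E.
  intros k Hk; unfold hodge at 1; rewrite !nu_plus_bivec; unfold nu_bivec, vadd, scale.
  destruct k as [|[|[|[|[|[|k]]]]]]; try lia; rewrite !E by lia; unfold hodge; ring.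
Qed.

Lemma nu_smooth k : Cinf (fun x y => nu_plus phi x y k).
Proof.
  apply (Cinf_ext (fun x y => / sqrt 2 * U x y k)); [intros; symmetry; apply nu_plus_bivec|].
  unfold nu_bivec, vadd, scale; frame_smooth.
Qed.

Lemma nu_first_fundamental_form x y :
  dot 6 (dx (nu_plus phi) x y) (dx (nu_plus phi) x y) = L x y + 2 * b + (a * a + b * b) / L x y /\
  dot 6 (dy (nu_plus phi) x y) (dy (nu_plus phi) x y) = L x y - 2 * b + (a * a + b * b) / L x y /\
  dot 6 (dx (nu_plus phi) x y) (dy (nu_plus phi) x y) = - 2 * a.
Proof.
  set (c1 := 1 + b / L x y); set (c2 := a / L x y); set (d1 := -1 + b / L x y); set (d2 := - a / L x y).
  set (nux := scale (/ sqrt 2) (vadd (scale c1 (U1 x y)) (scale c2 (U2 x y)))).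
  set (nuy := scale (/ sqrt 2) (vadd (scale d1 (U2 x y)) (scale d2 (U1 x y)))).
  assert (Hx : forall k, (k < 6)%nat -> dx (nu_plus phi) x y k = nux k) by (intros; apply dx_nu).
  assert (Hy : forall k, (k < 6)%nat -> dy (nu_plus phi) x y k = nuy k) by (intros; apply dy_nu).
  rewrite (dot_ext 6 _ nux _ nux Hx Hx), (dot_ext 6 _ nuy _ nuy Hy Hy), (dot_ext 6 _ nux _ nuy Hx Hy).
  destruct (nu_gram x y) as (_ & G1 & G2 & _ & _ & G12).
  pose proof (L_neq0 x y).
  subst nux nuy; rewrite !dot_scalel, !dot_scaler, !dot_vaddl, !dot_vaddr, !dot_scalel, !dot_scaler.
  rewrite (dot_comm 6 (U2 x y) (U1 x y)), G1, G2, G12.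
  subst c1 c2 d1 d2; repeat split; rewrite <- ?Rmult_assoc, ?inv_sqrt2_sq; field; assumption.
Qed.

End StructureEquations.

(** * The immersion Phi_t *)

Section PhiMapProperties.
Variables (phi : R -> R -> vec) (L : R -> R -> R) (t : R).
Hypothesis Hphi : const_hopf_minimal_S3 phi L (sin t) (cos t).

Local Notation Phi := (PhiMap t phi).
Local Notation nu := (nu_plus phi).

Lemma PhiMap_nu x y k : (k < 6)%nat -> Phi x y k = nu x y k.
Proof. intro Hk; unfold PhiMap; apply Nat.ltb_lt in Hk; rewrite Hk; reflexivity. Qed.

Lemma dx_PhiMap x y k : (k < 6)%nat -> dx Phi x y k = dx nu x y k.
Proof. intro Hk; apply dxs_ext; intros; apply PhiMap_nu, Hk. Qed.

Lemma dy_PhiMap x y k : (k < 6)%nat -> dy Phi x y k = dy nu x y k.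
Proof. intro Hk; apply dys_ext; intros; apply PhiMap_nu, Hk. Qed.

Lemma dx_PhiMap_line x y : dx Phi x y 6%nat = 2 * sin (t / 2).
Proof.
  apply is_derive_unique.
  change (is_derive (fun s => 2 * (s * sin (t / 2) + y * cos (t / 2))) x (2 * sin (t / 2))).
  auto_derive; [exact I | ring].
Qed.

Lemma dy_PhiMap_line x y : dy Phi x y 6%nat = 2 * cos (t / 2).
Proof.
  apply is_derive_unique.
  change (is_derive (fun s => 2 * (x * sin (t / 2) + s * cos (t / 2))) y (2 * cos (t / 2))).
  auto_derive; [exact I | ring].
Qed.

Lemma PhiMap_isometric : isometric 7 Phi (fun x y => L x y + 2 + / L x y).
Proof.
  intros x y; rewrite !dot7E, dx_PhiMap_line, dy_PhiMap_line.
  assert (Ex : forall k, (k < 6)%nat -> dx Phi x y k = dx nu x y k) by apply dx_PhiMap.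
  assert (Ey : forall k, (k < 6)%nat -> dy Phi x y k = dy nu x y k) by apply dy_PhiMap.
  rewrite (dot_ext 6 _ _ _ _ Ex Ex), (dot_ext 6 _ _ _ _ Ey Ey), (dot_ext 6 _ _ _ _ Ex Ey).
  destruct (nu_first_fundamental_form _ _ _ _ Hphi x y) as (Exx & Eyy & Exy).
  rewrite Exx, Eyy, Exy.
  pose proof (L_neq0 _ _ _ _ Hphi x y); pose proof (sin2_cos2 t) as Hsc; unfold Rsqr in Hsc.
  pose proof (cos_2a_sin (t / 2)) as C1; pose proof (cos_2a_cos (t / 2)) as C2.
  pose proof (sin_2a (t / 2)) as S; replace (2 * (t / 2)) with t in C1, C2, S by field.
  split; [|split].
  - rewrite Hsc, C1; field; assumption.
  - rewrite Hsc, C2; field; assumption.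
  - rewrite S; ring.
Qed.

Lemma PhiMap_hopf x y : hopfS2R Phi x y = (cos t, sin t).
Proof.
  unfold hopfS2R, cdot, dz; simpl; rewrite !dot_scalel, !dot_scaler.
  assert (Ex : forall k, (k < 6)%nat -> dx Phi x y k = dx nu x y k) by apply dx_PhiMap.
  assert (Ey : forall k, (k < 6)%nat -> dy Phi x y k = dy nu x y k) by apply dy_PhiMap.
  rewrite (dot_ext 6 _ _ _ _ Ex Ex), (dot_ext 6 _ _ _ _ Ey Ey), (dot_ext 6 _ _ _ _ Ex Ey),
    (dot_ext 6 _ _ _ _ Ey Ex), (dot_comm 6 (dy nu x y) (dx nu x y)).
  destruct (nu_first_fundamental_form _ _ _ _ Hphi x y) as (Exx & Eyy & Exy).
  rewrite Exx, Eyy, Exy; f_equal; field; apply (L_neq0 _ _ _ _ Hphi).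
Qed.

Lemma PhiMap_sphere x y : self_dual (Phi x y) /\ dot 6 (Phi x y) (Phi x y) = 1.
Proof.
  assert (E : forall k, (k < 6)%nat -> Phi x y k = nu x y k) by apply PhiMap_nu.
  split.
  - intros k Hk; rewrite E by exact Hk.
    rewrite <- (nu_self_dual _ _ _ _ Hphi x y k Hk).
    destruct k as [|[|[|[|[|[|k]]]]]]; try lia; unfold hodge; rewrite E by lia; reflexivity.
  - rewrite (dot_ext 6 _ _ _ _ E E); apply (nu_unit _ _ _ _ Hphi).
Qed.

Lemma lap_PhiMap x y k : (k < 6)%nat -> lap Phi x y k = lap nu x y k.
Proof.
  intro Hk; unfold lap, vadd; f_equal;
    [apply dxs_ext; intros; apply dx_PhiMap | apply dys_ext; intros; apply dy_PhiMap]; exact Hk.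
Qed.

Lemma lap_PhiMap_line x y : lap Phi x y 6%nat = 0.
Proof.
  unfold lap, vadd, dx at 1, dy at 1.
  rewrite (dxs_ext _ (fun _ _ => 2 * sin (t / 2))) by apply dx_PhiMap_line.
  rewrite (dys_ext _ (fun _ _ => 2 * cos (t / 2))) by apply dy_PhiMap_line.
  rewrite dxs_const, dys_const; ring.
Qed.

Lemma PhiMap_minimal : minimal_S2R Phi.
Proof.
  intros x y w _ Hw.
  assert (E : forall k, (k < 6)%nat -> Phi x y k = nu x y k) by apply PhiMap_nu.
  assert (EL : forall k, (k < 6)%nat -> lap Phi x y k
      = scale (- (2 * L x y + 2 * (sin t * sin t + cos t * cos t) / L x y)) (nu x y) k).
  { intros k Hk; rewrite lap_PhiMap by exact Hk; apply (lap_nu _ _ _ _ Hphi). }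
  rewrite dot7E, lap_PhiMap_line, (dot_ext 6 _ _ w w EL (fun _ _ => eq_refl)), dot_scalel.
  rewrite (dot_ext 6 w w _ _ (fun _ _ => eq_refl) E), dot_comm in Hw.
  rewrite Hw; ring.
Qed.

Lemma PhiMap_smooth : smooth 7 Phi.
Proof.
  apply smooth_vCinf; intros i Hi.
  destruct (Nat.lt_ge_cases i 6) as [Hlt | Hge].
  - apply (Cinf_ext (fun x y => nu x y i)); [intros; symmetry; apply PhiMap_nu, Hlt|].
    apply (nu_smooth _ _ _ _ Hphi).
  - replace i with 6%nat by lia.
    apply (Cinf_ext (fun x y => 2 * (x * sin (t / 2) + y * cos (t / 2)))); [reflexivity|].
    apply Cinf_mult; [apply Cinf_const|].
    apply Cinf_plus; apply Cinf_mult; auto using Cinf_fst, Cinf_snd, Cinf_const.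
Qed.

End PhiMapProperties.

Lemma four_cosh_sq u : 4 * cosh u ^ 2 = exp (2 * u) + 2 + / exp (2 * u).
Proof.
  unfold cosh; replace (2 * u) with (u + u) by ring.
  rewrite exp_plus, exp_Ropp; pose proof (exp_pos u); field; lra.
Qed.

Theorem corollary5p5 (v : R -> R -> R) (phi : R -> R -> R -> vec) :
  smooth_scalar v ->
  (* v_{z zbar} + sinh(2v)/2 = 0, with v_{z zbar} = (v_xx + v_yy)/4 *)
  (forall x y, / 4 * laps v x y + / 2 * sinh (2 * v x y) = 0) ->
  (forall t, isometric_minimal_S3 (phi t) (fun x y => exp (2 * v x y))) ->
  (forall t x y, hopfS3 (phi t) x y = Cmult (0, / 2) (cos t, sin t)) ->
  forall t,
    isometric_minimal_S2R (PhiMap t (phi t)) (fun x y => 4 * (cosh (v x y)) ^ 2) /\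
    (forall x y, hopfS2R (PhiMap t (phi t)) x y = (cos t, sin t)).
Proof.
  intros _ _ Hmin Hhopf t.
  assert (Hphi : const_hopf_minimal_S3 (phi t) (fun x y => exp (2 * v x y)) (sin t) (cos t))
    by (split; [apply Hmin | split; [intros; apply exp_pos | apply Hhopf]]).
  split; [split; [|split; [|split]]|].
  - exact (PhiMap_smooth _ _ _ Hphi).
  - exact (PhiMap_sphere _ _ _ Hphi).
  - intros x y; rewrite four_cosh_sq; exact (PhiMap_isometric _ _ _ Hphi x y).
  - exact (PhiMap_minimal _ _ _ Hphi).
  - exact (PhiMap_hopf _ _ _ Hphi).
Qed.
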